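(* Let $\alpha_1,\alpha_2,\alpha_3\in\mathbb{C}$. For arrays $\mathbf{x}=(x_s)_{s\in\mathbb{Z}}$, $\mathbf{y}=(y_s)_{s\in\mathbb{Z}}$ and $v\in\mathbb{Z}$ write $z_i=x_{v+i}$, $w_i=y_{v+i}$, and $D=\alpha_3^2z_1^6+2\alpha_2\alpha_3z_0z_1^4z_2+(\alpha_2^2-4\alpha_1)z_0^2z_1^2z_2^2-4\alpha_3z_0^3z_2^3$. Consider the conditions (for all $v\in\mathbb{Z}$): (E) $z_0^2z_3^2+\alpha_1z_1^2z_2^2+\alpha_2z_0z_1z_2z_3+\alpha_3(z_0z_2^3+z_1^3z_3)=0$; (Coh) $z_0^2z_3=z_{-1}z_2^2$; (R1) $z_3=\dfrac{-\alpha_3z_1^3-\alpha_2z_0z_1z_2+w_1}{2z_0^2}$; (R2) $w_2=\dfrac{\alpha_3^2z_1^6+\alpha_2\alpha_3z_0z_1^4z_2+2\alpha_3z_0^3z_2^3+w_1^2+(-2\alpha_3z_1^3-\alpha_2z_0z_1z_2)w_1}{2z_0^3}$; (S) $w_1^2=D$. (a) For any $\mathbf{x}\in(\mathbb{C}^* )^{\mathbb{Z}}$ satisfying (E) and (Coh) there exists $\mathbf{y}\in\mathbb{C}^{\mathbb{Z}}$ such that $\mathbf{x},\mathbf{y}$ satisfy (R1), (R2), (S). (b) Conversely, if $\mathbf{x}\in(\mathbb{C}^* )^{\mathbb{Z}}$ and $\mathbf{y}\in\mathbb{C}^{\mathbb{Z}}$ satisfy (R1), (R2), (S), then $\mathbf{x}$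 satisfies (E) and (Coh). *)

From HB Require Import structures.
From mathcomp Require Import all_boot all_order all_algebra.
From mathcomp Require Import complex.
From mathcomp Require Import reals.
Set Implicit Arguments. Unset Strict Implicit. Unset Printing Implicit Defensive.
Import Order.TTheory GRing.Theory Num.Theory.
Local Open Scope ring_scope.
Local Open Scope complex_scope.

Section Defs.
Variable R : realType.
Notation C := (R[i]).
Variables (a1 a2 a3 : C).

Definition zv (x : int -> C) (v : int) (i : int) : C := x (v + i).

Definition Dv (x : int -> C) (v : int) : C :=
  let z0 := zv x v 0 in let z1 := zv x v 1 in let z2 := zv x v 2 in
  a3 ^+ 2 * z1 ^+ 6 + 2 * a2 * a3 * z0 * z1 ^+ 4 * z2
  + (a2 ^+ 2 - 4 * a1) * z0 ^+ 2 * z1 ^+ 2 * z2 ^+ 2 - 4 * a3 * z0 ^+ 3 * z2 ^+ 3.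

Definition condE (x : int -> C) : Prop := forall v : int,
  let z0 := zv x v 0 in let z1 := zv x v 1 in let z2 := zv x v 2 in
  let z3 := zv x v 3 in
  z0 ^+ 2 * z3 ^+ 2 + a1 * z1 ^+ 2 * z2 ^+ 2 + a2 * z0 * z1 * z2 * z3
  + a3 * (z0 * z2 ^+ 3 + z1 ^+ 3 * z3) = 0.

Definition condCoh (x : int -> C) : Prop := forall v : int,
  zv x v 0 ^+ 2 * zv x v 3 = zv x v (-1) * zv x v 2 ^+ 2.

Definition condR1 (x y : int -> C) : Prop := forall v : int,
  let z0 := zv x v 0 in let z1 := zv x v 1 in let z2 := zv x v 2 in
  let z3 := zv x v 3 in let w1 := zv y v 1 in
  z3 = (- a3 * z1 ^+ 3 - a2 * z0 * z1 * z2 + w1) / (2 * z0 ^+ 2).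

Definition condR2 (x y : int -> C) : Prop := forall v : int,
  let z0 := zv x v 0 in let z1 := zv x v 1 in let z2 := zv x v 2 in
  let w1 := zv y v 1 in let w2 := zv y v 2 in
  w2 = (a3 ^+ 2 * z1 ^+ 6 + a2 * a3 * z0 * z1 ^+ 4 * z2
        + 2 * a3 * z0 ^+ 3 * z2 ^+ 3 + w1 ^+ 2
        + (- 2 * a3 * z1 ^+ 3 - a2 * z0 * z1 * z2) * w1) / (2 * z0 ^+ 3).

Definition condS (x y : int -> C) : Prop := forall v : int,
  zv y v 1 ^+ 2 = Dv x v.

End Defs.

(** Solving (R1) for [w1] gives [w1 = 2 z0^2 z3 + a3 z1^3 + a2 z0 z1 z2], so a
    solution [y] of (R1) is determined by [x].  For this [w1] one has the identity
    [w1^2 - D = 4 z0^2 E], hence (S) is (E) at the same index; and substituting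
    both [w1] and [w2] into (R2) leaves [2 (z1^2 z4 - z0 z3^2) = 0], which is
    (Coh) at the next index. *)
From HB Require Import structures.
From mathcomp Require Import all_boot all_order all_algebra.
From mathcomp Require Import complex.
From mathcomp Require Import reals.
From mathcomp Require Import ring.
Set Implicit Arguments. Unset Strict Implicit. Unset Printing Implicit Defensive.
Import Order.TTheory GRing.Theory Num.Theory.
Local Open Scope ring_scope.
Local Open Scope complex_scope.

Section Window.
Variable F : fieldType.
Variables (a1 a2 a3 : F).
Hypothesis two_neq0 : (2 : F) != 0.

Definition quarticE (z0 z1 z2 z3 : F) : F :=
  z0 ^+ 2 * z3 ^+ 2 + a1 * z1 ^+ 2 * z2 ^+ 2 + a2 * z0 * z1 * z2 * z3
  + a3 * (z0 * z2 ^+ 3 + z1 ^+ 3 * z3).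

Definition discr (z0 z1 z2 : F) : F :=
  a3 ^+ 2 * z1 ^+ 6 + 2 * a2 * a3 * z0 * z1 ^+ 4 * z2
  + (a2 ^+ 2 - 4 * a1) * z0 ^+ 2 * z1 ^+ 2 * z2 ^+ 2 - 4 * a3 * z0 ^+ 3 * z2 ^+ 3.

Definition r1_rhs (z0 z1 z2 w1 : F) : F :=
  (- a3 * z1 ^+ 3 - a2 * z0 * z1 * z2 + w1) / (2 * z0 ^+ 2).

Definition r2_rhs (z0 z1 z2 w1 : F) : F :=
  (a3 ^+ 2 * z1 ^+ 6 + a2 * a3 * z0 * z1 ^+ 4 * z2
   + 2 * a3 * z0 ^+ 3 * z2 ^+ 3 + w1 ^+ 2
   + (- 2 * a3 * z1 ^+ 3 - a2 * z0 * z1 * z2) * w1) / (2 * z0 ^+ 3).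

Definition w_of (z0 z1 z2 z3 : F) : F :=
  2 * z0 ^+ 2 * z3 + a3 * z1 ^+ 3 + a2 * z0 * z1 * z2.

Lemma eq_r1_rhs {z0 z1 z2 z3 w1 : F} : z0 != 0 ->
  (z3 = r1_rhs z0 z1 z2 w1) <-> (w1 = w_of z0 z1 z2 z3).
Proof.
move=> z0_neq0; rewrite /r1_rhs /w_of.
by split=> ->; field; rewrite two_neq0 z0_neq0.
Qed.

Lemma sqr_w_of_subr_discr (z0 z1 z2 z3 : F) :
  w_of z0 z1 z2 z3 ^+ 2 - discr z0 z1 z2 = (2 * z0) ^+ 2 * quarticE z0 z1 z2 z3.
Proof. by rewrite /w_of /discr /quarticE; ring. Qed.

Lemma sqr_w_of_eq_discr {z0 z1 z2 z3 : F} : z0 != 0 ->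
  (w_of z0 z1 z2 z3 ^+ 2 = discr z0 z1 z2) <-> (quarticE z0 z1 z2 z3 = 0).
Proof.
move=> z0_neq0; have scale_neq0 : (2 * z0) ^+ 2 != 0 by rewrite sqrf_eq0 mulf_neq0.
split=> h.
- by apply: (mulfI scale_neq0); rewrite mulr0 -sqr_w_of_subr_discr h subrr.
- by apply/subr0_eq; rewrite sqr_w_of_subr_discr h mulr0.
Qed.

Lemma r2_rhs_w_of (z0 z1 z2 z3 : F) : z0 != 0 ->
  r2_rhs z0 z1 z2 (w_of z0 z1 z2 z3) = 2 * z0 * z3 ^+ 2 + a3 * z2 ^+ 3 + a2 * z1 * z2 * z3.
Proof. by move=> z0_neq0; rewrite /r2_rhs /w_of; field; rewrite two_neq0 z0_neq0. Qed.

Lemma w_of_eq_r2_rhs {z0 z1 z2 z3 z4 : F} : z0 != 0 ->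
  (w_of z1 z2 z3 z4 = r2_rhs z0 z1 z2 (w_of z0 z1 z2 z3)) <->
  (z1 ^+ 2 * z4 = z0 * z3 ^+ 2).
Proof.
move=> z0_neq0.
have gap : w_of z1 z2 z3 z4 - r2_rhs z0 z1 z2 (w_of z0 z1 z2 z3)
           = 2 * (z1 ^+ 2 * z4 - z0 * z3 ^+ 2) by rewrite r2_rhs_w_of // /w_of; ring.
split=> h.
- by apply/subr0_eq/(mulfI two_neq0); rewrite mulr0 -gap h subrr.
- by apply/subr0_eq; rewrite gap h subrr mulr0.
Qed.

End Window.

Section Arrays.
Variable R : realType.
Variables (a1 a2 a3 : R[i]) (x : int -> R[i]).
Hypothesis x_neq0 : forall s, x s != 0.

Lemma two_neq0 : (2 : R[i]) != 0.
Proof. by rewrite pnatr_eq0. Qed.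

Lemma zv_addr1 (u : int -> R[i]) v i : zv u (v + 1) i = zv u v (i + 1).
Proof. by rewrite /zv -addrA [1 + i]addrC. Qed.

Definition w_at (v : int) : R[i] :=
  w_of a2 a3 (zv x v 0) (zv x v 1) (zv x v 2) (zv x v 3).

Lemma condR1_iff (y : int -> R[i]) :
  condR1 a2 a3 x y <-> forall v, zv y v 1 = w_at v.
Proof.
by split=> h v; apply/(eq_r1_rhs a2 a3 two_neq0 (x_neq0 _))/h.
Qed.

Section GivenR1.
Variable y : int -> R[i].
Hypothesis yE : forall v, zv y v 1 = w_at v.

Lemma condS_iff_condE : condS a1 a2 a3 x y <-> condE a1 a2 a3 x.
Proof.
split=> h v.
- by have := h v; rewrite yE => /(sqr_w_of_eq_discr a1 a2 a3 two_neq0 (x_neq0 _)).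
- by rewrite yE; apply/(sqr_w_of_eq_discr a1 a2 a3 two_neq0 (x_neq0 _))/h.
Qed.

Lemma r2_at_iff_coh_at v :
  zv y v 2 = r2_rhs a2 a3 (zv x v 0) (zv x v 1) (zv x v 2) (zv y v 1) <->
  zv x (v + 1) 0 ^+ 2 * zv x (v + 1) 3 = zv x (v + 1) (-1) * zv x (v + 1) 2 ^+ 2.
Proof.
have -> : zv y v 2 = w_at (v + 1) by rewrite -yE zv_addr1.
rewrite yE /w_at !zv_addr1 (w_of_eq_r2_rhs a2 a3 two_neq0 (x_neq0 _)).
exact: iff_refl.
Qed.

Lemma condR2_iff_condCoh : condR2 a2 a3 x y <-> condCoh x.
Proof.
split=> h v; last exact/r2_at_iff_coh_at/h.
by rewrite -(subrK 1 v); apply/r2_at_iff_coh_at/h.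
Qed.

End GivenR1.
End Arrays.

Theorem theorem6p4 (R : realType) (a1 a2 a3 : R[i]) :
  (forall x : int -> R[i], (forall s, x s != 0) ->
     condE a1 a2 a3 x -> condCoh x ->
     exists y : int -> R[i],
       [/\ condR1 a2 a3 x y, condR2 a2 a3 x y & condS a1 a2 a3 x y]) /\
  (forall (x y : int -> R[i]), (forall s, x s != 0) ->
     condR1 a2 a3 x y -> condR2 a2 a3 x y -> condS a1 a2 a3 x y ->
     condE a1 a2 a3 x /\ condCoh x).
Proof.
split.
- move=> x x_neq0 hE hCoh.
  pose y s := w_at a2 a3 x (s - 1).
  have yE v : zv y v 1 = w_at a2 a3 x v by rewrite /y /zv addrK.
  exists y; split.
  + exact/(condR1_iff _ _ x_neq0).
  + exact/(condR2_iff_condCoh x_neq0 yE).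
  + exact/(condS_iff_condE _ x_neq0 yE).
- move=> x y x_neq0 hR1 hR2 hS.
  have yE := (condR1_iff _ _ x_neq0 y).1 hR1.
  split; [exact/(condS_iff_condE _ x_neq0 yE) | exact/(condR2_iff_condCoh x_neq0 yE)].
Qed.
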